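(* Consider the $l$-th cycle of RPF-SFISTA, with $\mu=\mu_{l-1}$. For every iteration index $j\ge1$ generated during this cycle: (a) $L_{j-1}\le L_j$ (the sequence $\{L_j\}$ is nondecreasing); (b) $\tau_{j-1}=1+\frac{\mu A_{j-1}}{2}$, $\frac{\tau_{j-1}A_j}{a_{j-1}^2}=L_j$, $\underline M_l\le L_{j-1}\le\max\{\underline M_l,\kappa\bar L\}$, $v_j\in\nabla f(y_j)+\partial h(y_j)$, and $\|v_j\|\le\zeta_l\|y_j-\tilde x_{j-1}\|$; (c) $A_jL_j\ge\max\left\{\frac{j^2}{4},\ (1+Q_l^{-1})^{2(j-1)}\right\}$.
   Context: Setup. Let $f:\mathbb R^n\to\mathbb R$ be convex and differentiable with $\|\nabla f(z')-\nabla f(z)\|\le\bar L\|z'-z\|$ for all $z,z'\in\mathbb R^n$ (some $\bar L\ge0$). Let $h:\mathbb R^n\to(-\infty,\infty]$ be proper, lower semicontinuous and convex with domain $\mathcal H$. Let $\phi:=f+h$ be $\bar\mu$-strongly convex for some $\bar\mu>0$, with (unique) minimizer $z^*$. Write $\ell_f(u;x):=f(x)+\langle\nabla f(x),u-x\rangle$. Define $\kappa:=2\beta/(1-\chi)$. RPF-SFISTA. Parameters $\chi\in(0,1)$, $\beta>1$; inputs $\mu_0>0$, $\bar M_0>0$, $z_0\in\mathcal H$, $\hat\epsilon>0$. The method runs in cycles $l=1,2,\dots$. At the start of cycle $l$: choose $\underline M_l\in[\max\{\bar M_{l-1}/4,\bar M_0\},\bar M_{l-1}]$ (so $\underline M_1=\bar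 M_0$), set $\mu:=\mu_{l-1}$, $x_0:=z_{l-1}$, $\xi_0:=y_0:=x_0$, $A_0:=0$, $\tau_0:=1$, $L_0:=\underline M_l$. Then for $j=1,2,\dots$: (i) set $L_j:=L_{j-1}$; (ii) compute $a_{j-1}=\frac{\tau_{j-1}+\sqrt{\tau_{j-1}^2+4\tau_{j-1}A_{j-1}L_j}}{2L_j}$, $\tilde x_{j-1}=\frac{A_{j-1}y_{j-1}+a_{j-1}x_{j-1}}{A_{j-1}+a_{j-1}}$, $y_j=\arg\min_{u}\{\ell_f(u;\tilde x_{j-1})+h(u)+\frac{L_j}{2}\|u-\tilde x_{j-1}\|^2\}$; if $f(y_j)\le\ell_f(y_j;\tilde x_{j-1})+\frac{(1-\chi)L_j}{4}\|y_j-\tilde x_{j-1}\|^2$ go to (iii), otherwise replace $L_j$ by $\beta L_j$ and repeat (ii); (iii) set $\xi_j:=y_j$ if $\phi(y_j)\le\phi(\xi_{j-1})$ and $\xi_j:=\xi_{j-1}$ otherwise; $A_j:=A_{j-1}+a_{j-1}$; $\tau_j:=\tau_{j-1}+a_{j-1}\mu/2$; $s_j:=L_j(\tilde x_{j-1}-y_j)$; $x_j:=\tau_j^{-1}[\mu a_{j-1}y_j/2+\tau_{j-1}x_{j-1}-a_{j-1}s_j]$; $v_j:=\nabla f(y_j)-\nabla f(\tilde x_{j-1})+s_j$; (iv) if $\|\xi_j-x_0\|^2<\chi A_jL_j\|y_j-\tilde x_{j-1}\|^2$, the cycle ends with a restart: set $z_l:=\xi_j$, $\bar M_l:=L_j$,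 $\mu_l:=\mu/2$ and start cycle $l+1$; (v) otherwise, if $\|v_j\|\le\hat\epsilon$, stop and output $(y,v,\xi,L):=(y_j,v_j,\xi_j,L_j)$; else go to iteration $j+1$. Cycle quantities: $\zeta_l:=\bar L+\max\{\underline M_l,\kappa\bar L\}$ and $Q_l:=2\sqrt2\sqrt{\max\{\underline M_l,\kappa\bar L\}/\mu_{l-1}}$. *)

(* R : realType, vectors of R^n are row vectors 'rV[R]_n,
   with the EUCLIDEAN inner product and norm defined below (the default
   mathcomp-analysis norm on matrices is the sup norm, so we do not use it). *)
From HB Require Import structures.
From mathcomp Require Import all_boot all_order all_algebra.
From mathcomp Require Import all_classical all_reals.
From mathcomp Require Import ereal.
Set Implicit Arguments.
Unset Strict Implicit.
Unset Printing Implicit Defensive.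
Import Order.TTheory GRing.Theory Num.Theory.
Local Open Scope ring_scope.

Section Defs.
Variables (R : realType) (n : nat).
Notation vec := 'rV[R]_n.

Definition dotv (u v : vec) : R := \sum_(i < n) u 0 i * v 0 i.
Definition normv (u : vec) : R := Num.sqrt (dotv u u).

Definition convex_fun (f : vec -> R) : Prop :=
  forall (x y : vec) (t : R), 0 <= t <= 1 ->
    f (t *: x + (1 - t) *: y) <= t * f x + (1 - t) * f y.

Definition has_gradient (f : vec -> R) (gradf : vec -> vec) : Prop :=
  forall x : vec, forall eps : R, 0 < eps -> exists2 delta : R, 0 < delta &
    forall d : vec, normv d < delta ->
      `|f (x + d) - f x - dotv (gradf x) d| <= eps * normv d.

Definition lipschitz_grad (gradf : vec -> vec) (Lbar : R) : Prop :=
  forall z z' : vec, normv (gradf z' - gradf z) <= Lbar * normv (z' - z).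

Definition proper_fun (h : vec -> \bar R) : Prop :=
  (exists x, (h x < +oo)%E) /\ (forall x, h x != -oo%E).

Definition lsc_fun (h : vec -> \bar R) : Prop :=
  forall (x : vec) (a : R), (a%:E < h x)%E ->
    exists2 delta : R, 0 < delta &
      forall y : vec, normv (y - x) < delta -> (a%:E < h y)%E.

Definition convex_efun (h : vec -> \bar R) : Prop :=
  forall (x y : vec) (t : R), 0 <= t <= 1 ->
    (h (t *: x + (1 - t) *: y)%R <= t%:E * h x + (1 - t)%R%:E * h y)%E.

Definition strongly_convex_efun (phi : vec -> \bar R) (mu : R) : Prop :=
  forall (x y : vec) (t : R), 0 <= t <= 1 ->
    (phi (t *: x + (1 - t) *: y)%R <=
       t%:E * phi x + (1 - t)%R%:E * phi y
       - (mu / 2 * t * (1 - t) * normv (x - y) ^+ 2)%:E)%E.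

Definition edom (h : vec -> \bar R) : set vec := [set x | (h x < +oo)%E].

Definition subdiff (h : vec -> \bar R) (y : vec) : set vec :=
  [set w | (h y < +oo)%E /\
           forall u : vec, (h y + (dotv w (u - y)%R)%:E <= h u)%E].

Definition linf (f : vec -> R) (gradf : vec -> vec) (u x : vec) : R :=
  f x + dotv (gradf x) (u - x).

Definition a_step (tau A L : R) : R :=
  (tau + Num.sqrt (tau ^+ 2 + 4 * tau * A * L)) / (2 * L).

Definition xt_step (A a : R) (y x : vec) : vec :=
  (A + a)^-1 *: (A *: y + a *: x).

Definition is_prox_min (f : vec -> R) (gradf : vec -> vec) (h : vec -> \bar R)
  (L : R) (xt y : vec) : Prop :=
  forall u : vec,
    ((linf f gradf y xt + L / 2 * normv (y - xt) ^+ 2)%:E + h y <=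
     (linf f gradf u xt + L / 2 * normv (u - xt) ^+ 2)%:E + h u)%E.

Definition bt_test (f : vec -> R) (gradf : vec -> vec) (chi L : R) (xt y : vec)
  : Prop :=
  f y <= linf f gradf y xt + (1 - chi) * L / 4 * normv (y - xt) ^+ 2.

(* The sequences are indexed so that
   L j = L_j, A j = A_j, tau j = tau_j, x j = x_j, y j = y_j, xi j = xi_j,
   s j = s_j, v j = v_j, while a j = a_j and xt j = tilde x_j
   (so a_{j-1} = a (j.-1) and tilde x_{j-1} = xt (j.-1)). *)
Definition rpf_cycle (f : vec -> R) (gradf : vec -> vec) (h : vec -> \bar R)
  (chi beta epshat mu Mlow : R) (x0 : vec) (J : nat)
  (L A tau a : nat -> R) (x y xt xi s v : nat -> vec) : Prop :=
  let phi := fun z => ((f z)%:E + h z)%E in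
  [/\ [/\ A 0%N = 0, tau 0%N = 1 & L 0%N = Mlow],
      [/\ x 0%N = x0, y 0%N = x0 & xi 0%N = x0],
      (forall j : nat, (1 <= j <= J)%N ->
        [/\
            (exists K : nat, L j = beta ^+ K * L j.-1 /\
              (forall k : nat, (k < K)%N ->
                 let Lc := beta ^+ k * L j.-1 in
                 let ac := a_step (tau j.-1) (A j.-1) Lc in
                 let xc := xt_step (A j.-1) ac (y j.-1) (x j.-1) in
                 exists2 yc : vec, is_prox_min f gradf h Lc xc yc &
                                   ~ bt_test f gradf chi Lc xc yc)),
            a j.-1 = a_step (tau j.-1) (A j.-1) (L j),
            xt j.-1 = xt_step (A j.-1) (a j.-1) (y j.-1) (x j.-1),
            is_prox_min f gradf h (L j) (xt j.-1) (y j) &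
            bt_test f gradf chi (L j) (xt j.-1) (y j)]
        /\
        [/\
            xi j = (if (phi (y j) <= phi (xi j.-1))%E then y j else xi j.-1),
            A j = A j.-1 + a j.-1 /\ tau j = tau j.-1 + a j.-1 * mu / 2,
            s j = L j *: (xt j.-1 - y j),
            x j = (tau j)^-1 *: (mu * a j.-1 / 2 *: y j + tau j.-1 *: x j.-1
                                 - a j.-1 *: s j) &
            v j = gradf (y j) - gradf (xt j.-1) + s j]) &
      (* (iv)-(v): iterations j < J neither restarted nor stopped *)
      (forall j : nat, (1 <= j < J)%N ->
         ~ (normv (xi j - x0) ^+ 2 < chi * A j * L j * normv (y j - xt j.-1) ^+ 2)
         /\ epshat < normv (v j))].

End Defs.

(* The backtracking test can only fail for a trial [Lc] with [(1 - chi) Lc < 2 Lbar]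
   (descent lemma), so [L_j] never exceeds [max (L_{j-1}) (kappa Lbar)] and stays in
   [[Mlow, max Mlow (kappa Lbar)]].  The step [a_{j-1}] solves
   [L_j a^2 = tau_{j-1} A_j] with [tau_{j-1} = 1 + mu A_{j-1} / 2].  From [tau >= 1]
   one gets [(A_j - A_{j-1}) L_j >= sqrt (A_j L_j)], i.e. [sqrt (A_j L_j)] grows by at
   least [1/2] per step; from [tau >= mu A_{j-1} / 2] and [L_j <= max Mlow (kappa Lbar)]
   one gets [A_j >= (1 + 1/Q)^2 A_{j-1}].  The claims on [v_j] are the optimality
   condition of the prox step and the Lipschitz continuity of the gradient. *)

From HB Require Import structures.
From mathcomp Require Import all_boot all_order all_algebra.
From mathcomp Require Import all_classical all_reals.
From mathcomp Require Import ereal.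
From mathcomp Require Import all_analysis.
From mathcomp Require Import ring lra.
Import Order.TTheory GRing.Theory Num.Theory.
Import numFieldNormedType.Exports.
Local Open Scope ring_scope.
Set Implicit Arguments.
Unset Strict Implicit.

Section EuclideanNorm.
Variables (R : realType) (n : nat).
Implicit Types u v w : 'rV[R]_n.

Lemma dotvC u v : dotv u v = dotv v u.
Proof. by apply: eq_bigr => i _; rewrite mulrC. Qed.

Lemma dotvDl u v w : dotv (u + v) w = dotv u w + dotv v w.
Proof. by rewrite /dotv -big_split; apply: eq_bigr => i _; rewrite !mxE mulrDl. Qed.

Lemma dotvZl c u v : dotv (c *: u) v = c * dotv u v.
Proof. by rewrite /dotv mulr_sumr; apply: eq_bigr => i _; rewrite !mxE mulrA. Qed.

Lemma dotvNl u v : dotv (- u) v = - dotv u v.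
Proof. by rewrite -scaleN1r dotvZl mulN1r. Qed.

Lemma dotvBl u v w : dotv (u - v) w = dotv u w - dotv v w.
Proof. by rewrite dotvDl dotvNl. Qed.

Lemma dotvDr u v w : dotv w (u + v) = dotv w u + dotv w v.
Proof. by rewrite dotvC dotvDl !(dotvC w). Qed.

Lemma dotvZr c u v : dotv v (c *: u) = c * dotv v u.
Proof. by rewrite dotvC dotvZl dotvC. Qed.

Lemma dotvBr u v w : dotv w (u - v) = dotv w u - dotv w v.
Proof. by rewrite !(dotvC w) dotvBl. Qed.

Lemma dotvv_ge0 u : 0 <= dotv u u.
Proof. by apply: sumr_ge0 => i _; rewrite -expr2 sqr_ge0. Qed.

Lemma normv_ge0 u : 0 <= normv u.
Proof. exact: sqrtr_ge0. Qed.

Lemma normv_sqr u : normv u ^+ 2 = dotv u u.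
Proof. by rewrite sqr_sqrtr // dotvv_ge0. Qed.

Lemma dotv_sqr_le u v : dotv u v ^+ 2 <= dotv u u * dotv v v.
Proof.
set a := dotv v v; set b := dotv u v; set c := dotv u u.
have a_ge0 : 0 <= a := dotvv_ge0 v.
have quad_ge0 t : 0 <= c - 2 * t * b + t ^+ 2 * a.
  have := dotvv_ge0 (u - t *: v).
  by rewrite !dotvBl !dotvBr !dotvZl !dotvZr (dotvC v u) -/a -/b -/c; nra.
have [a0|a_neq0] := eqVneq a 0.
  suff -> : b = 0 by rewrite a0 expr0n mulr0.
  apply/eqP; apply: contraTT (quad_ge0 ((c + 1) / (2 * b))) => b_neq0.
  rewrite a0 mulr0 addr0 -ltNge.
  have -> : 2 * ((c + 1) / (2 * b)) * b = c + 1 by field.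
  lra.
have a_gt0 : 0 < a by rewrite lt_def a_neq0.
have := quad_ge0 (b / a).
have -> : c - 2 * (b / a) * b + (b / a) ^+ 2 * a = (c * a - b ^+ 2) / a by field.
by rewrite pmulr_lge0 ?invr_gt0 // subr_ge0 mulrC.
Qed.

Lemma dotv_le u v : dotv u v <= normv u * normv v.
Proof.
apply: le_trans (ler_norm _) _.
rewrite -sqrtrM ?dotvv_ge0 // -sqrtr_sqr.
exact/ler_wsqrtr/dotv_sqr_le.
Qed.

Lemma normvZ c u : normv (c *: u) = `|c| * normv u.
Proof. by rewrite /normv dotvZl dotvZr mulrA -expr2 sqrtrM ?sqr_ge0 // sqrtr_sqr. Qed.

Lemma normvN u : normv (- u) = normv u.
Proof. by rewrite -scaleN1r normvZ normrN1 mul1r. Qed.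

Lemma normvD u v : normv (u + v) <= normv u + normv v.
Proof.
have : dotv (u + v) (u + v) <= (normv u + normv v) ^+ 2.
  rewrite !dotvDl !dotvDr sqrrD !normv_sqr (dotvC v u).
  by have := dotv_le u v; lra.
move/ler_wsqrtr; rewrite sqrtr_sqr ger0_norm //.
by rewrite addr_ge0 // normv_ge0.
Qed.

End EuclideanNorm.

Section DescentLemma.
Variables (R : realType) (n : nat).
Variables (f : 'rV[R]_n -> R) (gradf : 'rV[R]_n -> 'rV[R]_n).
Hypothesis f_grad : has_gradient f gradf.

Lemma is_derive_along_line (x d : 'rV[R]_n) (t : R) :
  is_derive t 1 (fun s => f (x + s *: d)) (dotv (gradf (x + t *: d)) d).
Proof.
set g := fun s => f (x + s *: d); set l := dotv (gradf (x + t *: d)) d.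
suff cvg_l : ((fun e : R => e^-1 *: ((g \o shift t) (e *: (1 : R)) - g t))
             @ (0 : R)^' --> l)%classic.
  have g_der : derivable g t 1 by apply/cvg_ex; exists l.
  by apply: DeriveDef => //; exact: cvg_lim cvg_l.
apply/cvgrPdist_le => e e_gt0.
have nd_ge0 := normv_ge0 d.
have nd1_gt0 : 0 < normv d + 1 by lra.
have [del del_gt0 Hdel] := f_grad (x + t *: d) (divr_gt0 e_gt0 nd1_gt0).
move: (dnbhs_ball (0 : R) (divr_gt0 del_gt0 nd1_gt0)); apply: filterS => r [].
rewrite /ball /= sub0r normrN => r_small /eqP r_neq0; rewrite /g.
have -> : x + (r%:A + t) *: d = x + t *: d + r *: d.
  by rewrite [_%:A]mulr1 scalerDl addrA (addrAC x).
have r_del : normv (r *: d) < del.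
  rewrite normvZ; apply: le_lt_trans (_ : `|r| * (normv d + 1) < del).
    by rewrite ler_pM2l ?normr_gt0 //; lra.
  by rewrite -ltr_pdivlMr.
have := Hdel _ r_del; rewrite dotvZr normvZ -/l.
set F := f _ - f _.
have -> : l - r^-1 *: F = - (r^-1 * (F - r * l)) by rewrite [_ *: F]/GRing.scale /=; field.
rewrite normrN normrM normfV ler_pdivrMl ?normr_gt0 // => /le_trans; apply.
have -> : e / (normv d + 1) * (`|r| * normv d) = `|r| * e * (normv d / (normv d + 1)).
  by field; rewrite lt0r_neq0.
rewrite ler_piMr ?mulr_ge0 ?normr_ge0 ?(ltW e_gt0) //.
by rewrite ler_pdivrMr //; lra.
Qed.

Lemma is_derive_affine_quadratic (b c t : R) :
  is_derive t 1 (fun s : R => b * s + c * (s * s)) (b + c * (t + t)).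
Proof.
have D : is_derive t 1 (b \*: (@id R) + c \*: (@id R * @id R))
                     (b *: 1 + c *: (t *: 1 + t *: 1)).
  by apply: is_deriveD; apply: is_deriveZ.
have -> : (fun s : R => b * s + c * (s * s)) = b \*: (@id R) + c \*: (@id R * @id R).
  exact/funext.
by apply: is_derive_eq D _; rewrite /GRing.scale /=; ring.
Qed.

Lemma descent_lemma Lbar : lipschitz_grad gradf Lbar -> 0 <= Lbar ->
  forall x d, f (x + d) <= f x + dotv (gradf x) d + Lbar / 2 * normv d ^+ 2.
Proof.
move=> grad_lip Lbar_ge0 x d.
set b := dotv (gradf x) d; set c := Lbar / 2 * normv d ^+ 2.
pose k s := f (x + s *: d) - (b * s + c * (s * s)).
have k_der (t : R) : is_derive t 1 k (dotv (gradf (x + t *: d)) d - (b + c * (t + t))).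
  exact: is_deriveB (is_derive_along_line x d t) (is_derive_affine_quadratic b c t).
have k_derivable (t : R) : derivable k t 1 by case: (k_der t).
have k_cont : {within `[0, 1], continuous k}%classic.
  by apply: derivable_within_continuous => t _; exact: k_derivable.
have k'_le0 (t : R) : t \in `]0, 1[ -> (k^`())%classic t <= 0.
  rewrite in_itv /= => /andP[t_gt0 _]; rewrite derive1E derive_val.
  have := dotv_le (gradf (x + t *: d) - gradf x) d.
  have := grad_lip x (x + t *: d).
  rewrite [x + _ - x]addrAC subrr add0r normvZ gtr0_norm //.
  move=> /(ler_wpM2r (normv_ge0 d)) lip; rewrite dotvBl -/b /c; nra.
have := @ler0_derive1_le_cc R k 0 1 (fun t _ => k_derivable t) k'_le0 k_cont 1 0.
rewrite !in_itv /= => k_decr.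
have : k 1 <= k 0 by apply: k_decr; rewrite ?lexx ?ler01.
by rewrite /k scale1r scale0r addr0 !mulr0 !mulr1 addr0 subr0; lra.
Qed.

End DescentLemma.

Lemma le_of_le_addr_scaled (R : realFieldType) (a b c : R) : 0 <= c ->
  (forall t, 0 < t <= 1 -> a <= b + c * t) -> a <= b.
Proof.
move=> c_ge0 le_addr_t; apply/ler_addgt0Pr => e e_gt0.
have c1_gt0 : 0 < c + 1 by lra.
set t := Num.min 1 (e / (c + 1)).
have t_gt0 : 0 < t by rewrite lt_min ltr01 divr_gt0.
apply: le_trans (le_addr_t t _) _; first by rewrite t_gt0 ge_min lexx.
rewrite lerD2l; apply: le_trans (_ : c * (e / (c + 1)) <= e).
  by rewrite ler_wpM2l // ge_min lexx orbT.
by rewrite mulrA ler_pdivrMr //; nra.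
Qed.

Section ProxOptimality.
Variables (R : realType) (n : nat).
Variables (f : 'rV[R]_n -> R) (gradf : 'rV[R]_n -> 'rV[R]_n) (h : 'rV[R]_n -> \bar R).
Hypotheses (h_proper : proper_fun h) (h_convex : convex_efun h).

Let fin_of_proper z : (h z < +oo)%E -> exists r, h z = r%:E.
Proof. by case: h_proper => _ /(_ z); case: (h z) => // r _ _; exists r. Qed.

(* Test the minimality of [y] against [y + t (u - y)] and let [t] tend to [0]. *)
Lemma prox_min_subdiff (L : R) (xt y : 'rV[R]_n) : 0 <= L ->
  is_prox_min f gradf h L xt y -> subdiff h y (L *: (xt - y) - gradf xt).
Proof.
move=> L_ge0 y_min.
have [hy hyE] : exists r, h y = r%:E.
  case: h_proper => -[x1 hx1_fin] _; apply: fin_of_proper.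
  have [r1 r1E] := fin_of_proper hx1_fin.
  by move: (y_min x1); rewrite r1E; case: (h y) => // r; rewrite ltry.
split=> [|u]; first by rewrite hyE ltry.
case hu : (h u) => [r| |]; last by case: h_proper => _ /(_ u); rewrite hu.
  2: by rewrite leey.
rewrite hyE -EFinD lee_fin.
set D := u - y; set Y := y - xt.
apply: (le_of_le_addr_scaled (c := L / 2 * normv D ^+ 2)).
  by rewrite mulr_ge0 ?sqr_ge0 // divr_ge0.
move=> t /andP[t_gt0 t_le1].
have t01 : 0 <= t <= 1 by rewrite t_le1 ltW.
have ytD : t *: u + (1 - t) *: y = y + t *: D.
  by rewrite /D scalerBl scale1r scalerBr addrCA.
have := h_convex u y t01; rewrite ytD hu hyE -!EFinM -EFinD => h_ytD_le.
have [r' r'E] := fin_of_proper (le_lt_trans h_ytD_le (ltry _)).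
move: h_ytD_le (y_min (y + t *: D)); rewrite r'E hyE -!EFinD !lee_fin /linf.
have -> : y + t *: D - xt = Y + t *: D by rewrite /Y addrAC.
have -> : xt - y = - Y by rewrite opprB.
rewrite -/Y; clearbody D Y.
rewrite !normv_sqr !dotvDl !dotvDr !dotvZl !dotvZr !dotvNl (dotvC Y D).
set DD := dotv D D; set DY := dotv D Y; set gD := dotv (gradf xt) D.
move=> h_conv_le min_le.
have : t * (hy + (L * - DY - gD) - (r + L / 2 * DD * t)) <= 0 by nra.
by rewrite pmulr_rle0 // subr_le0.
Qed.

End ProxOptimality.

Section Backtracking.
Variables (R : realType) (n : nat).
Variables (f : 'rV[R]_n -> R) (gradf : 'rV[R]_n -> 'rV[R]_n) (Lbar chi beta : R).
Hypotheses (f_grad : has_gradient f gradf) (grad_lip : lipschitz_grad gradf Lbar).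
Hypotheses (Lbar_ge0 : 0 <= Lbar) (chi_lt1 : chi < 1) (beta_gt1 : 1 < beta).

(* By the descent lemma the test can only fail when [(1 - chi) Lc / 4 < Lbar / 2]. *)
Lemma bt_test_fail_lt (Lc : R) (xc yc : 'rV[R]_n) :
  ~ bt_test f gradf chi Lc xc yc -> (1 - chi) * Lc < 2 * Lbar.
Proof.
move=> test_fails.
have {test_fails} : linf f gradf yc xc + (1 - chi) * Lc / 4 * normv (yc - xc) ^+ 2 < f yc.
  by rewrite ltNge; apply/negP.
rewrite /linf => test_fails.
have := descent_lemma f_grad grad_lip Lbar_ge0 xc (yc - xc).
rewrite addrCA subrr addr0 => descent.
have N_ge0 := sqr_ge0 (normv (yc - xc)); set N := normv (yc - xc) ^+ 2 in N_ge0 descent test_fails *.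
rewrite ltNge; apply/negP => Lc_large.
have : Lbar / 2 * N <= (1 - chi) * Lc / 4 * N by rewrite ler_wpM2r //; lra.
lra.
Qed.

Lemma backtrack_le_max (K : nat) (Lprev : R) : 0 <= Lprev ->
  (forall k, (k < K)%N ->
     exists xc yc, ~ bt_test f gradf chi (beta ^+ k * Lprev) xc yc) ->
  beta ^+ K * Lprev <= Num.max Lprev (2 * beta / (1 - chi) * Lbar).
Proof.
move=> Lprev_ge0; case: K => [_|k rejected]; first by rewrite expr0 mul1r le_max lexx.
have [xc [yc /bt_test_fail_lt]] := rejected k (ltnSn k).
set Lc := beta ^+ k * Lprev => Lc_small.
rewrite le_max; apply/orP; right.
have -> : 2 * beta / (1 - chi) * Lbar = beta * (2 * Lbar / (1 - chi)).
  by field; rewrite subr_eq0 gt_eqF.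
rewrite exprS -mulrA -/Lc ler_pM2l ?(lt_trans ltr01 beta_gt1) //.
by rewrite ler_pdivlMr ?subr_gt0 // mulrC ltW.
Qed.

End Backtracking.

Lemma a_step_gt0 (R : realType) (tau A L : R) : 0 < tau -> 0 < L ->
  0 < a_step tau A L.
Proof. by move=> tau_gt0 L_gt0; rewrite divr_gt0 ?ltr_wpDr ?sqrtr_ge0 ?mulr_gt0. Qed.

Lemma a_stepP (R : realType) (tau A L : R) : 0 <= tau -> 0 <= A -> 0 < L ->
  L * a_step tau A L ^+ 2 = tau * (A + a_step tau A L).
Proof.
move=> tau_ge0 A_ge0 L_gt0; rewrite /a_step.
set S := Num.sqrt _.
have S2 : S ^+ 2 = tau ^+ 2 + 4 * tau * A * L.
  by rewrite sqr_sqrtr // addr_ge0 ?sqr_ge0 // !mulr_ge0 // ltW.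
apply/eqP; rewrite -subr_eq0.
have -> : L * ((tau + S) / (2 * L)) ^+ 2 - tau * (A + (tau + S) / (2 * L))
          = (S ^+ 2 - (tau ^+ 2 + 4 * tau * A * L)) / (4 * L).
  by field; rewrite lt0r_neq0.
by rewrite S2 subrr mul0r.
Qed.

(* One step of the geometric growth of [A_j L_j], with [q = 1/Q]. *)
Lemma geometric_growth_step (R : realFieldType) (q A a : R) :
  0 <= a -> 0 <= A -> 0 <= q -> 4 * q ^+ 2 * A * (A + a) <= a ^+ 2 ->
  (1 + q) ^+ 2 * A <= A + a.
Proof.
move=> a_ge0 A_ge0 q_ge0 a_sqr_ge; set b := 2 * q * (1 + q) * A.
suff b_le_a : b <= a.
  have : 0 <= q ^+ 2 * A by rewrite mulr_ge0 ?sqr_ge0.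
  have : (1 + q) ^+ 2 * A = A + b - q ^+ 2 * A by rewrite /b; ring.
  lra.
rewrite leNgt; apply/negP => a_lt_b.
have qA_ge0 : 0 <= q * A by apply: mulr_ge0.
(* [b] lies below the positive root of [a^2 - 4 q^2 A a - 4 q^2 A^2]. *)
have gap : 0 <= (a - b) * (a + b - 4 * q ^+ 2 * A).
  have -> : (a - b) * (a + b - 4 * q ^+ 2 * A)
            = (a ^+ 2 - 4 * q ^+ 2 * A * (A + a)) + 4 * (q * A) ^+ 2 * q ^+ 2.
    by rewrite /b; ring.
  by rewrite addr_ge0 ?subr_ge0 // !mulr_ge0 ?sqr_ge0.
have a_small : a + b <= 4 * q ^+ 2 * A by nra.
have : a * (a - 4 * q ^+ 2 * A) <= 0 by nra.
have : 4 * (q * A) ^+ 2 <= a * (a - 4 * q ^+ 2 * A) by nra.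
have : 0 < b by lra.
rewrite /b; nra.
Qed.

(* One step of the quadratic growth of [A_j L_j]: if [N - P >= sqrt N] then
   [sqrt N >= sqrt P + 1/2]. *)
Lemma quadratic_growth_step (R : rcfType) (m P N : R) :
  0 < m -> m ^+ 2 <= P -> P <= N -> N <= (N - P) ^+ 2 -> (m + 1 / 2) ^+ 2 <= N.
Proof.
move=> m_gt0 mP PN NP.
have N_ge0 : 0 <= N by have := sqr_ge0 m; lra.
set r := Num.sqrt N.
have r_ge0 : 0 <= r by apply: sqrtr_ge0.
have rN : r ^+ 2 = N by rewrite sqr_sqrtr.
have r_le : r <= N - P by rewrite -(@ler_pXn2r _ 2) ?nnegrE ?rN // subr_ge0.
rewrite -rN ler_pXn2r ?nnegrE //; last lra.
rewrite leNgt; apply/negP => r_small.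
have : m ^+ 2 <= r ^+ 2 - r by lra.
have [half_le_r|] := lerP (1 / 2) r; last nra.
have : (r - 1 / 2) * (r - 1 / 2) <= m * m by nra.
have : (r - 1 / 2) * (r - 1 / 2) = r ^+ 2 - r + 1 / 4 by field.
nra.
Qed.

Lemma prox_residual_le (R : realType) (n : nat) (gradf : 'rV[R]_n -> 'rV[R]_n)
    (Lbar L : R) (xt y : 'rV[R]_n) :
  lipschitz_grad gradf Lbar -> 0 <= L ->
  normv (gradf y - gradf xt + L *: (xt - y)) <= (Lbar + L) * normv (y - xt).
Proof.
move=> grad_lip L_ge0; apply: le_trans (normvD _ _) _.
rewrite normvZ ger0_norm // -[xt - y]opprB normvN mulrDl.
by have := grad_lip xt y; lra.
Qed.

Section Cycle.
Variables (R : realType) (n : nat).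
Variables (f : 'rV[R]_n -> R) (gradf : 'rV[R]_n -> 'rV[R]_n) (h : 'rV[R]_n -> \bar R).
Variables (Lbar chi beta epshat mu Mlow : R) (x0 : 'rV[R]_n) (J : nat).
Variables (L A tau a : nat -> R) (x y xt xi s v : nat -> 'rV[R]_n).
Hypotheses (f_grad : has_gradient f gradf) (grad_lip : lipschitz_grad gradf Lbar).
Hypotheses (Lbar_ge0 : 0 <= Lbar) (chi_lt1 : chi < 1) (beta_gt1 : 1 < beta).
Hypotheses (mu_gt0 : 0 < mu) (Mlow_gt0 : 0 < Mlow).
Hypothesis cycle : rpf_cycle f gradf h chi beta epshat mu Mlow x0 J L A tau a x y xt xi s v.

Let kappa := 2 * beta / (1 - chi).
Let M := Num.max Mlow (kappa * Lbar).
Let Q := 2 * Num.sqrt 2 * Num.sqrt (M / mu).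

Lemma cycle_update i : (i < J)%N -> 0 <= L i ->
  [/\ L i <= L i.+1 <= Num.max (L i) (kappa * Lbar),
      a i = a_step (tau i) (A i) (L i.+1),
      A i.+1 = A i + a i & tau i.+1 = tau i + a i * mu / 2].
Proof.
move=> iJ Li_ge0; case: cycle => _ _ /(_ i.+1) iter _.
have /= [[[K [LK rejected]] aE _ _ _] [_ [AE tauE] _ _ _]] := iter iJ.
split=> //; rewrite LK; apply/andP; split.
  by rewrite ler_peMl // exprn_ege1 // ltW.
apply: (backtrack_le_max f_grad grad_lip) => // k k_lt_K.
have /= [yc _ fails] := rejected k k_lt_K.
by exists (xt_step (A i) (a_step (tau i) (A i) (beta ^+ k * L i)) (y i) (x i)), yc.
Qed.

Lemma cycle_invariant i : (i <= J)%N ->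
  [/\ Mlow <= L i <= M, tau i = 1 + mu * A i / 2 & 0 <= A i].
Proof.
have [[A0 tau0 L0] _ _ _] := cycle.
elim: i => [_|i IH iJ]; first by rewrite A0 tau0 L0 mulr0 mul0r addr0 le_max !lexx.
have [/andP[Mlow_le Li_le] tauE A_ge0] := IH (ltnW iJ).
have [/andP[L_le L_le_max] aE AE tauE'] := cycle_update iJ (le_trans (ltW Mlow_gt0) Mlow_le).
have tau_gt0 : 0 < tau i by rewrite tauE; have := mulr_ge0 (ltW mu_gt0) A_ge0; lra.
have L1_gt0 : 0 < L i.+1 by apply: lt_le_trans L_le; apply: lt_le_trans Mlow_le.
have a_gt0 : 0 < a i by rewrite aE a_step_gt0.
split.
- rewrite (le_trans Mlow_le L_le) /=; apply: le_trans L_le_max _.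
  by rewrite ge_max Li_le le_max lexx orbT.
- by rewrite tauE' tauE AE; ring.
- by rewrite AE; lra.
Qed.

Lemma cycle_step i : (i < J)%N ->
  [/\ L i <= L i.+1, 0 < a i, L i.+1 * a i ^+ 2 = tau i * A i.+1 & A i.+1 = A i + a i].
Proof.
move=> iJ; have [/andP[Mlow_le _] tauE A_ge0] := cycle_invariant (ltnW iJ).
have [/andP[L_le _] aE AE _] := cycle_update iJ (le_trans (ltW Mlow_gt0) Mlow_le).
have L1_gt0 : 0 < L i.+1 by apply: lt_le_trans L_le; apply: lt_le_trans Mlow_le.
have tau_gt0 : 0 < tau i by rewrite tauE; have := mulr_ge0 (ltW mu_gt0) A_ge0; lra.
split=> //; first by rewrite aE a_step_gt0.
by rewrite AE aE a_stepP // ltW.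
Qed.

Lemma cycle_AL1 : (0 < J)%N -> A 1%N * L 1%N = 1.
Proof.
move=> J_gt0; have [[A0 tau0 _] _ _ _] := cycle.
have [_ a_gt0 La2 AE] := cycle_step J_gt0.
rewrite AE A0 add0r tau0 mul1r in La2 *.
by apply: (mulIf (lt0r_neq0 a_gt0)); rewrite mul1r -[RHS]La2; ring.
Qed.

Lemma cycle_AL_ge_quadratic i : (i < J)%N -> i.+1%:R ^+ 2 / 4 <= A i.+1 * L i.+1.
Proof.
elim: i => [J_gt0|i IH iJ]; first by rewrite cycle_AL1 // expr1n; lra.
have [L_le a_gt0 La2 AE] := cycle_step iJ.
have [/andP[Mlow_le _] tauE A_ge0] := cycle_invariant (ltnW iJ).
have L_gt0 : 0 < L i.+1 := lt_le_trans Mlow_gt0 Mlow_le.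
have -> : i.+2%:R ^+ 2 / 4 = (i.+1%:R / 2 + 1 / 2) ^+ 2 :> R.
  by rewrite -[i.+2]addn1 natrD; field.
apply: (quadratic_growth_step (P := A i.+1 * L i.+2)).
- by rewrite divr_gt0 ?ltr0n.
- have -> : (i.+1%:R / 2) ^+ 2 = i.+1%:R ^+ 2 / 4 :> R by field.
  by apply: le_trans (IH (ltnW iJ)) _; rewrite ler_wpM2l.
- by rewrite AE ler_wpM2r ?lerDl ?ltW //; apply: lt_le_trans L_le.
- have -> : A i.+2 * L i.+2 - A i.+1 * L i.+2 = a i.+1 * L i.+2 by rewrite AE; ring.
  have -> : (a i.+1 * L i.+2) ^+ 2 = tau i.+1 * (A i.+2 * L i.+2).
    by rewrite mulrA -La2; ring.
  have tau_ge1 : 1 <= tau i.+1 by rewrite tauE; have := mulr_ge0 (ltW mu_gt0) A_ge0; lra.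
  have L2_ge0 : 0 <= L i.+2 := le_trans (ltW L_gt0) L_le.
  by rewrite ler_peMl // mulr_ge0 // AE addr_ge0 // ltW.
Qed.

Lemma cycle_AL_ge_geometric i : (i < J)%N -> (1 + Q^-1) ^+ (2 * i) <= A i.+1 * L i.+1.
Proof.
have M_gt0 : 0 < M by rewrite lt_max Mlow_gt0.
set q := Q^-1.
have q_gt0 : 0 < q by rewrite invr_gt0 !mulr_gt0 ?sqrtr_gt0 ?divr_gt0.
have q2E : 4 * q ^+ 2 = mu / (2 * M).
  rewrite /q /Q exprVn !exprMn !sqr_sqrtr ?divr_ge0 ?ltW //.
  by field; rewrite ?lt0r_neq0.
elim: i => [J_gt0|i IH iJ]; first by rewrite cycle_AL1 // muln0 expr0.
have [L_le a_gt0 La2 AE] := cycle_step iJ.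
have [/andP[Mlow_le _] tauE A_ge0] := cycle_invariant (ltnW iJ).
have [/andP[_ L2_le_M] _ _] := cycle_invariant iJ.
have L2_gt0 : 0 < L i.+2 by apply: lt_le_trans L_le; apply: lt_le_trans Mlow_le.
have A2_ge0 : 0 <= A i.+2 by rewrite AE addr_ge0 // ltW.
(* [a^2 = tau A' / L' >= (mu A / 2) A' / M = 4 q^2 A A'] *)
have growth : 4 * q ^+ 2 * A i.+1 * A i.+2 <= a i.+1 ^+ 2.
  have -> : 4 * q ^+ 2 * A i.+1 * A i.+2 = (mu * A i.+1 / 2 * A i.+2) / M.
    by rewrite q2E; field; rewrite lt0r_neq0.
  apply: le_trans (_ : (mu * A i.+1 / 2 * A i.+2) / L i.+2 <= _).
    have X_ge0 : 0 <= mu * A i.+1 / 2 * A i.+2 by rewrite !mulr_ge0 ?invr_ge0 // ltW.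
    by rewrite ler_wpM2l // lef_pV2 ?posrE.
  by rewrite ler_pdivrMr // (mulrC (a _ ^+ 2)) La2 tauE ler_wpM2r //; lra.
have A_growth : (1 + q) ^+ 2 * A i.+1 <= A i.+2.
  by rewrite AE; apply: geometric_growth_step; rewrite ?(ltW a_gt0) ?(ltW q_gt0) -?AE.
rewrite mulnS exprD.
apply: le_trans (_ : (1 + q) ^+ 2 * (A i.+1 * L i.+2) <= _).
  by rewrite ler_wpM2l ?sqr_ge0 // (le_trans (IH (ltnW iJ))) // ler_wpM2l.
by rewrite mulrA ler_wpM2r // ltW.
Qed.

End Cycle.

Theorem lemma2p3 (R : realType) (n : nat)
  (f : 'rV[R]_n -> R) (gradf : 'rV[R]_n -> 'rV[R]_n) (h : 'rV[R]_n -> \bar R)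
  (Lbar mubar : R) (zstar : 'rV[R]_n)
  (chi beta : R) (barM0 barMprev Mlow mu epshat : R) (x0 : 'rV[R]_n) (J : nat)
  (L A tau a : nat -> R) (x y xt xi s v : nat -> 'rV[R]_n) :
  (* standing assumptions *)
  convex_fun f -> has_gradient f gradf -> 0 <= Lbar -> lipschitz_grad gradf Lbar ->
  proper_fun h -> lsc_fun h -> convex_efun h ->
  0 < mubar -> strongly_convex_efun (fun z => ((f z)%:E + h z)%E) mubar ->
  (forall z, ((f zstar)%:E + h zstar <= (f z)%:E + h z)%E) ->
  (* parameters and inputs of the cycle *)
  0 < chi < 1 -> 1 < beta -> 0 < epshat -> 0 < mu ->
  0 < barM0 -> Num.max (barMprev / 4) barM0 <= Mlow <= barMprev ->
  edom h x0 ->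
  rpf_cycle f gradf h chi beta epshat mu Mlow x0 J L A tau a x y xt xi s v ->
  let kappa := 2 * beta / (1 - chi) in
  let zeta := Lbar + Num.max Mlow (kappa * Lbar) in
  let Q := 2 * Num.sqrt 2 * Num.sqrt (Num.max Mlow (kappa * Lbar) / mu) in
  forall j : nat, (1 <= j <= J)%N ->
    [/\ (* (a) *) L j.-1 <= L j,
        (* (b) *)
        [/\ tau j.-1 = 1 + mu * A j.-1 / 2,
            tau j.-1 * A j / a j.-1 ^+ 2 = L j,
            Mlow <= L j.-1 <= Num.max Mlow (kappa * Lbar),
            (exists2 w, subdiff h (y j) w & v j = gradf (y j) + w) &
            normv (v j) <= zeta * normv (y j - xt j.-1)] &
        (* (c) *)
        Num.max ((j%:R) ^+ 2 / 4) ((1 + Q^-1) ^+ (2 * j.-1)) <= A j * L j].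
Proof.
move=> _ f_grad Lbar_ge0 grad_lip h_proper _ h_convex _ _ _ /andP[_ chi_lt1] beta_gt1
  _ mu_gt0 M0_gt0 /andP[Mlow_ge _] _ cycle kappa zeta Q [//|i] /andP[_ iJ] /=.
have Mlow_gt0 : 0 < Mlow by move: Mlow_ge; rewrite ge_max => /andP[_]; apply: lt_le_trans.
move: (cycle_step f_grad grad_lip Lbar_ge0 chi_lt1 beta_gt1 mu_gt0 Mlow_gt0 cycle)
  (cycle_invariant f_grad grad_lip Lbar_ge0 chi_lt1 beta_gt1 mu_gt0 Mlow_gt0 cycle)
  (cycle_AL_ge_quadratic f_grad grad_lip Lbar_ge0 chi_lt1 beta_gt1 mu_gt0 Mlow_gt0 cycle)
  (cycle_AL_ge_geometric f_grad grad_lip Lbar_ge0 chi_lt1 beta_gt1 mu_gt0 Mlow_gt0 cycle).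
move=> /(_ i iJ) [L_le a_gt0 La2 _] cycle_inv /(_ i iJ) AL_quad /(_ i iJ) AL_geom.
have [L_bounds tauE _] := cycle_inv i (ltnW iJ).
have [/andP[Mlow_le L1_le] _ _] := cycle_inv i.+1 iJ.
have [_ _ /(_ i.+1 iJ) /= [[_ _ _ y_min _] [_ _ sE _ vE]] _] := cycle.
have L1_ge0 : 0 <= L i.+1 := le_trans (ltW Mlow_gt0) Mlow_le.
split; [done | split=> // | by rewrite ge_max AL_quad AL_geom].
- by rewrite -La2 mulfK // expf_neq0 // lt0r_neq0.
- exists (L i.+1 *: (xt i - y i.+1) - gradf (xt i)); first exact: prox_min_subdiff.
  by rewrite vE sE addrA addrAC.
- rewrite vE sE /zeta; apply: le_trans (prox_residual_le _ _ grad_lip L1_ge0) _.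
  by rewrite ler_wpM2r ?normv_ge0 // lerD2l.
Qed.
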